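(* Let $A$ be a ring and $|\cdot|:A\to R$ a generalized seminorm that has tiny balls. Then the ball neighborhood topology for $|\cdot|$ exists (there is a unique topology on $A$ compatible with addition in which, for every $x\in A$, the non-empty open balls $B(x,|a|)$, $a\in A$, $|a|>0$, form a fundamental system of neighborhoods of $x$), and it makes $A$ a topological ring.
   Context: A halo is a commutative unital semiring with a partial order compatible with $+$ and $\cdot$; an aura is a halo whose semiring is a semifield; positive means $0<1$. A generalized seminorm is a map $|\cdot|:A\to R$ into a positive totally ordered aura with $|0|=0,|1|=1$, $|a+b|\le|a|+|b|$, $|ab|\le|a||b|$. For $x,a\in A$ with $|a|>0$, the open ball is $B(x,|a|)=\{z\in A:|z-x|<|a|\}$. $|\cdot|$ has tiny balls if: (1) for all $a$ with $|a|>0$ there is $a'$ with $|a'|>0$ and $B(0,|a'|)+B(0,|a'|)\subset B(0,|a|)$; (2) for all $a$ with $|a|>0$ and all $x\in A$ there is $c$ with $|c|>0$ and $x\cdot B(0,|c|)\subset B(0,|a|)$; (3) for all $a$ with $|a|>0$ there is $a'$ with $|a'|>0$ and $B(0,|a'|)\cdot B(0,|a'|)\subset B(0,|a|)$; (4) for all $a$ with $|a|>0$ there is $a'$ with $|a'|>0$ and $-B(0,|a'|)\subset B(0,|a|)$. *)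

From mathcomp Require Import all_boot all_order all_algebra.
Set Implicit Arguments. Unset Strict Implicit. Unset Printing Implicit Defensive.
Import GRing.Theory.
Local Open Scope ring_scope.

Definition lt_of (R : Type) (le : R -> R -> Prop) (x y : R) : Prop :=
  le x y /\ x <> y.

Definition is_halo_order (R : comNzSemiRingType) (le : R -> R -> Prop) : Prop :=
  [/\ (forall x, le x x),
      (forall x y, le x y -> le y x -> x = y),
      (forall x y z, le x y -> le y z -> le x z),
      (forall x y z, le x y -> le (x + z) (y + z)) &
      (forall x y z, le x y -> le (x * z) (y * z))].

Definition is_semifield (R : comNzSemiRingType) : Prop :=
  forall x : R, x <> 0 -> exists y : R, x * y = 1.

Definition is_pos_total_aura (R : comNzSemiRingType) (le : R -> R -> Prop) : Prop :=
  [/\ is_halo_order le, is_semifield R,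
      (forall x y : R, le x y \/ le y x) &
      lt_of le 0 1].

Definition is_gen_seminorm (A : comNzRingType) (R : comNzSemiRingType)
    (le : R -> R -> Prop) (nrm : A -> R) : Prop :=
  [/\ nrm 0 = 0, nrm 1 = 1,
      (forall a b, le (nrm (a + b)) (nrm a + nrm b)) &
      (forall a b, le (nrm (a * b)) (nrm a * nrm b))].

Definition ball_of (A : comNzRingType) (R : comNzSemiRingType)
    (le : R -> R -> Prop) (nrm : A -> R) (x a : A) : A -> Prop :=
  fun z => lt_of le (nrm (z - x)) (nrm a).

Definition has_tiny_balls (A : comNzRingType) (R : comNzSemiRingType)
    (le : R -> R -> Prop) (nrm : A -> R) : Prop :=
  let pos a := lt_of le 0 (nrm a) in
  let B := ball_of le nrm 0 in
  [/\ (forall a, pos a -> exists a', pos a' /\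
          forall z w, B a' z -> B a' w -> B a (z + w)),
      (forall a, pos a -> forall x, exists c, pos c /\
          forall z, B c z -> B a (x * z)),
      (forall a, pos a -> exists a', pos a' /\
          forall z w, B a' z -> B a' w -> B a (z * w)) &
      (forall a, pos a -> exists a', pos a' /\
          forall z, B a' z -> B a (- z))].

Definition is_topology (T : Type) (O : (T -> Prop) -> Prop) : Prop :=
  [/\ O (fun _ => True),
      (forall U V, O U -> O V -> O (fun x => U x /\ V x)) &
      (forall F : (T -> Prop) -> Prop, (forall U, F U -> O U) ->
          O (fun x => exists U, F U /\ U x))].

Definition is_nbhd (T : Type) (O : (T -> Prop) -> Prop) (x : T) (N : T -> Prop) :=
  exists U, [/\ O U, U x & forall y, U y -> N y].

Definition fundamental_system (T : Type) (O : (T -> Prop) -> Prop) (x : T)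
    (Fam : (T -> Prop) -> Prop) : Prop :=
  (forall N, Fam N -> is_nbhd O x N) /\
  (forall N, is_nbhd O x N -> exists M, Fam M /\ forall y, M y -> N y).

Definition balls_fundamental (A : comNzRingType) (R : comNzSemiRingType)
    (le : R -> R -> Prop) (nrm : A -> R) (O : (A -> Prop) -> Prop) : Prop :=
  forall x : A, fundamental_system O x
    (fun N => exists a, lt_of le 0 (nrm a) /\ N = ball_of le nrm x a).

Definition continuous2 (T : Type) (O : (T -> Prop) -> Prop) (f : T -> T -> T) :=
  forall x y W, is_nbhd O (f x y) W ->
    exists U V, [/\ is_nbhd O x U, is_nbhd O y V &
                    forall u v, U u -> V v -> W (f u v)].

Definition continuous1 (T : Type) (O : (T -> Prop) -> Prop) (f : T -> T) :=
  forall x W, is_nbhd O (f x) W ->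
    exists U, is_nbhd O x U /\ forall u, U u -> W (f u).

Definition is_topological_ring (A : comNzRingType) (O : (A -> Prop) -> Prop) : Prop :=
  [/\ is_topology O, continuous2 O (fun x y => x + y),
      continuous1 O (fun x => - x) & continuous2 O (fun x y => x * y)].

From mathcomp Require Import all_boot all_order all_algebra.
From mathcomp Require Import ring.
From Stdlib Require Import FunctionalExtensionality PropExtensionality.
Set Implicit Arguments. Unset Strict Implicit. Unset Printing Implicit Defensive.
Import GRing.Theory.
Local Open Scope ring_scope.

(* The open sets are forced: U is open iff it contains a ball around each of
   its points, so the topology is unique if it exists.  These sets form a
   topology because totality of the order makes two balls around x contain a
   third, and every ball B(x, |a|) is a neighbourhood of x: by condition (1)
   of tiny balls, the points y having some ball B(y, |c|) inside B(x, |a|)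
   form an open set.  Continuity of the ring operations is read off the
   translation invariance of the balls and the identities
   u + v - (x + y) = (u - x) + (v - y) and
   u v - x y = (u - x)(v - y) + x (v - y) + y (u - x),
   each term being made small by the matching condition of tiny balls. *)

Section OpenFromFundamental.

Variables (T : Type) (O : (T -> Prop) -> Prop) (Fam : T -> (T -> Prop) -> Prop).
Hypothesis O_topology : is_topology O.
Hypothesis Fam_fundamental : forall x, fundamental_system O x (Fam x).

Lemma open_iff_fundamental (U : T -> Prop) :
  O U <-> forall x, U x -> exists N, Fam x N /\ forall y, N y -> U y.
Proof.
split=> [OU x Ux | HU].
  by apply: (Fam_fundamental x).2; exists U.
have [_ _ O_union] := O_topology.
have -> : U = fun x => exists V, (O V /\ forall y, V y -> U y) /\ V x.
  apply: functional_extensionality => x; apply: propositional_extensionality.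
  split=> [Ux | [V [[_ VU] Vx]]]; last exact: VU.
  have [N [FN NU]] := HU x Ux.
  have [V [OV Vx VN]] := (Fam_fundamental x).1 N FN.
  by exists V; split=> //; split=> // y /VN /NU.
by apply: O_union => V [].
Qed.

End OpenFromFundamental.

Lemma lt_of_le_trans (R : Type) (le : R -> R -> Prop) :
  (forall x y, le x y -> le y x -> x = y) ->
  (forall x y z, le x y -> le y z -> le x z) ->
  forall u v w, lt_of le u v -> le v w -> lt_of le u w.
Proof.
move=> le_anti le_trans u v w [uv neq_uv] vw; split; first exact: le_trans vw.
by move=> eq_uw; subst w; apply: neq_uv; apply: le_anti.
Qed.

Lemma ball_ofE (A : comNzRingType) (R : comNzSemiRingType)
    (le : R -> R -> Prop) (nrm : A -> R) x a z :
  ball_of le nrm x a z = ball_of le nrm 0 a (z - x).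
Proof. by rewrite /ball_of subr0. Qed.
Arguments ball_ofE {A R le nrm} x a z.

Section BallTopology.

Variables (A : comNzRingType) (R : comNzSemiRingType).
Variables (le : R -> R -> Prop) (nrm : A -> R).
Hypothesis le_anti : forall x y, le x y -> le y x -> x = y.
Hypothesis le_trans : forall x y z, le x y -> le y z -> le x z.
Hypothesis le_total : forall x y, le x y \/ le y x.
Hypothesis lt01 : lt_of le 0 1.
Hypothesis nrm0 : nrm 0 = 0.
Hypothesis nrm1 : nrm 1 = 1.
Hypothesis tiny : has_tiny_balls le nrm.

Local Notation pos a := (lt_of le 0 (nrm a)).
Local Notation B := (ball_of le nrm).

Definition ball_topology (U : A -> Prop) : Prop :=
  forall x, U x -> exists a, pos a /\ forall z, B x a z -> U z.

Lemma ball_center x c : pos c -> B x c x.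
Proof. by move=> pc; rewrite ball_ofE subrr /ball_of subr0 nrm0. Qed.

Lemma ball0_common_sub a b : pos a -> pos b -> exists c, [/\ pos c,
  forall z, B 0 c z -> B 0 a z & forall z, B 0 c z -> B 0 b z].
Proof.
move=> pa pb; have lt_trans := lt_of_le_trans le_anti le_trans.
case: (le_total (nrm a) (nrm b)) => [ab | ba].
  by exists a; split=> // z zc; apply: lt_trans ab.
by exists b; split=> // z zc; apply: lt_trans ba.
Qed.

Lemma ball_topology_is_topology : is_topology ball_topology.
Proof.
split.
- by move=> x _; exists 1; rewrite nrm1.
- move=> U V OU OV x [Ux Vx].
  have [a [pa Ha]] := OU x Ux; have [b [pb Hb]] := OV x Vx.
  have [c [pc ca cb]] := ball0_common_sub pa pb.
  exists c; split=> // z; rewrite ball_ofE => zc.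
  by split; [apply: Ha | apply: Hb]; rewrite ball_ofE; [apply: ca | apply: cb].
- move=> F OF x [U [FU Ux]]; have [a [pa Ha]] := OF U FU x Ux.
  by exists a; split=> // z /Ha Uz; exists U.
Qed.

Lemma ball_interior_open x a :
  ball_topology (fun y => exists c, pos c /\ forall z, B y c z -> B x a z).
Proof.
move=> y [c [pc yc_xa]]; have [tiny_add _ _ _] := tiny.
have [c' [pc' sum_c']] := tiny_add c pc.
exists c'; split=> // w wy; exists c'; split=> // z zw.
apply: yc_xa; rewrite ball_ofE.
have -> : z - y = (z - w) + (w - y) by ring.
by apply: sum_c'; rewrite -ball_ofE.
Qed.

Lemma ball_nbhd x a : pos a -> is_nbhd ball_topology x (B x a).
Proof.
move=> pa.
exists (fun y => exists c, pos c /\ forall z, B y c z -> B x a z); split.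
- exact: ball_interior_open.
- by exists a; split.
- by move=> y [c [pc /(_ y (ball_center y pc))]].
Qed.

Lemma nbhd_ball x W : is_nbhd ball_topology x W ->
  exists a, pos a /\ forall z, B x a z -> W z.
Proof.
move=> [U [OU Ux UW]]; have [a [pa Ha]] := OU x Ux.
by exists a; split=> // z /Ha /UW.
Qed.

Lemma ball_topology_fundamental : balls_fundamental le nrm ball_topology.
Proof.
move=> x; split=> [N [a [pa ->]] | N /nbhd_ball [a [pa Ha]]].
  exact: ball_nbhd.
by exists (B x a); split=> //; exists a.
Qed.

Lemma ball_topology_unique (O : (A -> Prop) -> Prop) :
  is_topology O -> balls_fundamental le nrm O ->
  forall U, O U <-> ball_topology U.
Proof.
move=> O_topology O_fundamental U.
rewrite (open_iff_fundamental O_topology O_fundamental).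
split=> HU x /HU; first by move=> [N [[a [pa ->]] NU]]; exists a.
by move=> [a [pa aU]]; exists (B x a); split=> //; exists a.
Qed.

Lemma ball_add_continuous : continuous2 ball_topology (fun x y => x + y).
Proof.
move=> x y W /nbhd_ball [a [pa Ha]].
have [tiny_add _ _ _] := tiny; have [a' [pa' Ha']] := tiny_add a pa.
exists (B x a'), (B y a'); split; [exact: ball_nbhd | exact: ball_nbhd |].
move=> u v; rewrite (ball_ofE x) (ball_ofE y) => ux vy.
apply: Ha; rewrite ball_ofE.
have -> : u + v - (x + y) = (u - x) + (v - y) by ring.
exact: Ha'.
Qed.

Lemma ball_opp_continuous : continuous1 ball_topology (fun x => - x).
Proof.
move=> x W /nbhd_ball [a [pa Ha]].
have [_ _ _ tiny_opp] := tiny; have [a' [pa' Ha']] := tiny_opp a pa.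
exists (B x a'); split=> [|u]; first exact: ball_nbhd.
rewrite ball_ofE => ux; apply: Ha; rewrite ball_ofE.
have -> : - u - - x = - (u - x) by ring.
exact: Ha'.
Qed.

Lemma ball0_shrink a : pos a ->
  exists a', pos a' /\ forall z, B 0 a' z -> B 0 a z.
Proof.
move=> pa; have [tiny_add _ _ _] := tiny; have [a' [pa' Ha']] := tiny_add a pa.
exists a'; split=> // z za'; rewrite -[z]addr0.
by apply: Ha' => //; apply: ball_center.
Qed.

Lemma ball_mul_continuous : continuous2 ball_topology (fun x y => x * y).
Proof.
move=> x y W /nbhd_ball [a [pa Ha]].
have [tiny_add tiny_scale tiny_mul _] := tiny.
have [a1 [pa1 sum_a1]] := tiny_add a pa.
have [a2 [pa2 sum_a2]] := tiny_add a1 pa1.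
have [a2' [pa2' sub_a2']] := ball0_shrink pa1.
have [a3 [pa3 mul_a3]] := tiny_mul a2 pa2.
have [c [pc mulx]] := tiny_scale a2 pa2 x.
have [d [pd muly]] := tiny_scale a2' pa2' y.
have [e [pe e_a3 e_d]] := ball0_common_sub pa3 pd.
have [f [pf f_a3 f_c]] := ball0_common_sub pa3 pc.
exists (B x e), (B y f); split; [exact: ball_nbhd | exact: ball_nbhd |].
move=> u v; rewrite (ball_ofE x) (ball_ofE y) => ux vy.
apply: Ha; rewrite ball_ofE.
have -> : u * v - x * y = ((u - x) * (v - y) + x * (v - y)) + y * (u - x).
  by ring.
apply: sum_a1; last exact/sub_a2'/muly/e_d.
by apply: sum_a2; [apply: mul_a3; [exact: e_a3 | exact: f_a3] | exact/mulx/f_c].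
Qed.

Lemma ball_topological_ring : is_topological_ring ball_topology.
Proof.
split; [exact: ball_topology_is_topology | exact: ball_add_continuous |
        exact: ball_opp_continuous | exact: ball_mul_continuous].
Qed.

End BallTopology.

Theorem proposition4p5 (A : comNzRingType) (R : comNzSemiRingType)
    (le : R -> R -> Prop) (nrm : A -> R) :
  is_pos_total_aura le ->
  is_gen_seminorm le nrm ->
  has_tiny_balls le nrm ->
  exists O : (A -> Prop) -> Prop,
    [/\ is_topology O,
        balls_fundamental le nrm O,
        (forall O' : (A -> Prop) -> Prop,
            is_topology O' -> balls_fundamental le nrm O' ->
            forall U, O' U <-> O U) &
        is_topological_ring O].
Proof.
move=> [[_ le_anti le_trans _ _] _ le_total lt01] [nrm0 nrm1 _ _] tiny.
exists (ball_topology le nrm); split.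
- exact: ball_topology_is_topology.
- exact: ball_topology_fundamental.
- exact: ball_topology_unique.
- exact: ball_topological_ring.
Qed.
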